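(* Let $R$ be a local ring and $s\in R$ a central element. Then $A\in M_2(R;s)$ is strongly $J$-clean if and only if one of the following holds: (1) $A\in J\big(M_2(R;s)\big)$; (2) $I_2-A\in J\big(M_2(R;s)\big)$; (3) $s\in U(R)$ and $A$ is similar to $\left[\begin{smallmatrix} v&0\\ 0&w\end{smallmatrix}\right]$ for some $v\in 1+J(R)$, $w\in J(R)$; (4) $s\in J(R)$ and $A$ is similar to $\left[\begin{smallmatrix} v&0\\ 0&w\end{smallmatrix}\right]$ or to $\left[\begin{smallmatrix} w&0\\ 0&v\end{smallmatrix}\right]$ for some $v\in 1+J(R)$, $w\in J(R)$.
   Context: All rings are associative with identity. A ring $R$ is local if $R/J(R)$ is a division ring, where $J(R)$ is the Jacobson radical; $U(R)$ is the group of units. For a ring $R$ and a central element $s\in R$, $M_2(R;s)$ denotes the ring whose elements are the $2\times 2$ arrays $\left[\begin{smallmatrix} a&b\\ c&d\end{smallmatrix}\right]$ with $a,b,c,d\in R$, with componentwise addition and multiplication $\left[\begin{smallmatrix} a&b\\ c&d\end{smallmatrix}\right]\left[\begin{smallmatrix} a'&b'\\ c'&d'\end{smallmatrix}\right]=\left[\begin{smallmatrix} aa'+s^2bc'&ab'+bd'\\ ca'+dc'&s^2cb'+dd'\end{smallmatrix}\right]$, with identity $I_2$. Two elements $A,B\in M_2(R;s)$ are similar if $B=P^{-1}AP$ for some unit $P$ of $M_2(R;s)$. An element $a$ of a ring $T$ is strongly $J$-clean if there is an idempotent $e\in T$ with $ae=ea$ and $a-e\in J(T)$. *)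

From mathcomp Require Import all_boot all_algebra.
Set Implicit Arguments. Unset Strict Implicit. Unset Printing Implicit Defensive.
Import GRing.Theory.
Local Open Scope ring_scope.

Section RingNotions.
Variable R : nzRingType.

Definition runit (x : R) : Prop := exists y : R, x * y = 1 /\ y * x = 1.

(* Jacobson radical J(R), via its standard element-wise description:
   x \in J(R) iff 1 - y x is a unit for every y. *)
Definition jac (x : R) : Prop := forall y : R, runit (1 - y * x).

(* R/J(R) is a division ring, written out literally on representatives:
   1 is nonzero mod J, and every element that is nonzero mod J has a
   two-sided inverse mod J. *)
Definition local_ring : Prop :=
  ~ jac 1 /\
  forall x : R, ~ jac x -> exists y : R, jac (x * y - 1) /\ jac (y * x - 1).

Definition central (s : R) : Prop := forall x : R, s * x = x * s.
End RingNotions.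

Record M2 (R : Type) := mkM2 { m11 : R; m12 : R; m21 : R; m22 : R }.
Arguments mkM2 {R}.

Section M2ops.
Variables (R : nzRingType) (s : R).

Definition M2add (A B : M2 R) : M2 R :=
  mkM2 (m11 A + m11 B) (m12 A + m12 B) (m21 A + m21 B) (m22 A + m22 B).
Definition M2opp (A : M2 R) : M2 R :=
  mkM2 (- m11 A) (- m12 A) (- m21 A) (- m22 A).
Definition M2sub (A B : M2 R) : M2 R := M2add A (M2opp B).
Definition M2one : M2 R := mkM2 1 0 0 1.
Definition M2mul (A B : M2 R) : M2 R :=
  mkM2 (m11 A * m11 B + s ^+ 2 * m12 A * m21 B)
       (m11 A * m12 B + m12 A * m22 B)
       (m21 A * m11 B + m22 A * m21 B)
       (s ^+ 2 * m21 A * m12 B + m22 A * m22 B).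

Definition M2unit (P : M2 R) : Prop :=
  exists Q : M2 R, M2mul P Q = M2one /\ M2mul Q P = M2one.

Definition M2jac (A : M2 R) : Prop :=
  forall Y : M2 R, M2unit (M2sub M2one (M2mul Y A)).

Definition M2similar (A B : M2 R) : Prop :=
  exists P Q : M2 R, M2mul P Q = M2one /\ M2mul Q P = M2one /\
                     B = M2mul (M2mul Q A) P.

Definition M2idem (E : M2 R) : Prop := M2mul E E = E.

Definition M2strongly_J_clean (A : M2 R) : Prop :=
  exists E : M2 R, M2idem E /\ M2mul A E = M2mul E A /\ M2jac (M2sub A E).
End M2ops.

Definition diag2 (R : nzRingType) (v w : R) : M2 R := mkM2 v 0 0 w.

(* Let E = [e1, e2; e3, e4] be an idempotent commuting with A and with
   A - E in J. Over a local ring each of e1, e4, 1 - e1, 1 - e4 is a unit or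
   lies in J. If e1, e4 lie in J then so does E, hence A; if e1 is a unit and
   1 - e4 lies in J then 1 - E lies in J, hence so does 1 - A. If e1 and
   1 - e4 are units then E is similar to diag(1, 0), and a matrix commuting
   with diag(1, 0) is diagonal, so A is similar to diag(v, w) with
   v - 1, w in J; the remaining case reduces to this one through the
   automorphism exchanging the diagonal corners. When s is a unit, diag(w, v)
   and diag(v, w) are similar. Conversely strong J-cleanness is invariant
   under similarity and diag(v, w) is cleaned by diag(1, 0). *)

From HB Require Import structures.
From mathcomp Require Import all_boot all_algebra.
From Stdlib Require Import Classical.
Set Implicit Arguments. Unset Strict Implicit. Unset Printing Implicit Defensive.
Import GRing.Theory.
Local Open Scope ring_scope.

Section RingTheory.
Variable K : nzRingType.
Implicit Types x y u : K.

Lemma runit1 : runit (1 : K). Proof. by exists 1; rewrite mulr1. Qed.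

Lemma runitM x y : runit x -> runit y -> runit (x * y).
Proof.
move=> [x' [xx' x'x]] [y' [yy' y'y]]; exists (y' * x'); split.
  by rewrite mulrA -(mulrA x) yy' mulr1.
by rewrite mulrA -(mulrA y') x'x mulr1.
Qed.

(* Jacobson's lemma: if u inverts 1 - x y, then 1 + y u x inverts 1 - y x. *)
Lemma runit_1B_mulC x y : runit (1 - x * y) -> runit (1 - y * x).
Proof.
move=> [u [hu1 hu2]]; exists (1 + y * u * x); split.
  have e : u - x * y * u = 1 by rewrite -hu1 mulrBl mul1r.
  have key : y * x = y * u * x - y * x * (y * u * x).
    by rewrite -{1}(mulr1 y) -e mulrBr mulrBl !mulrA.
  by rewrite mulrBl mul1r mulrDr mulr1 [X in _ - (X + _)]key subrK addrK.
have e : u - u * (x * y) = 1 by rewrite -hu2 mulrBr mulr1.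
have key : y * x = y * u * x - (y * u * x) * (y * x).
  by rewrite -{1}(mulr1 y) -e mulrBr mulrBl !mulrA.
by rewrite mulrBr mulr1 mulrDl mul1r [X in _ - (X + _)]key subrK addrK.
Qed.

Lemma jac0 : jac (0 : K). Proof. by move=> y; rewrite mulr0 subr0; exact: runit1. Qed.

Lemma jacN x : jac x -> jac (- x).
Proof. by move=> jx y; rewrite mulrN -mulNr; apply: jx. Qed.

Lemma jacMl x y : jac x -> jac (y * x).
Proof. by move=> jx z; rewrite mulrA; apply: jx. Qed.

Lemma jacMr x y : jac x -> jac (x * y).
Proof.
by move=> jx z; rewrite mulrA; apply: runit_1B_mulC; rewrite mulrA; apply: jx.
Qed.

Lemma jac_runit_1B x : jac x -> runit (1 - x).
Proof. by move=> jx; have := jx 1; rewrite mul1r. Qed.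

Lemma jacD x y : jac x -> jac y -> jac (x + y).
Proof.
move=> jx jy z; have [v [hv _]] := jx z.
have -> : 1 - z * (x + y) = (1 - z * x) * (1 - (v * z) * y).
  by rewrite mulrBr mulr1 !mulrA hv mul1r mulrDr opprD addrA.
exact: runitM.
Qed.

Lemma jacB x y : jac x -> jac y -> jac (x - y).
Proof. by move=> jx jy; apply/jacD/jacN. Qed.

Lemma jac_cancell u x : runit u -> jac (u * x) -> jac x.
Proof. by move=> [u' [_ u'u]] jux; rewrite -[x]mul1r -u'u -mulrA; apply: jacMl. Qed.

Lemma jac_cancelr u x : runit u -> jac (x * u) -> jac x.
Proof. by move=> [u' [uu' _]] jxu; rewrite -[x]mulr1 -uu' mulrA; apply: jacMr. Qed.

(* An inverse of x modulo J becomes a genuine two-sided inverse after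
   correcting by the units x y and y x. *)
Lemma local_runit x : local_ring K -> ~ jac x -> runit x.
Proof.
move=> [_ hl] nx; have [y [jxy jyx]] := hl x nx.
have [w [xyw _]] : runit (x * y).
  by have := jac_runit_1B (jacN jxy); rewrite opprK addrC subrK.
have [w' [_ w'yx]] : runit (y * x).
  by have := jac_runit_1B (jacN jyx); rewrite opprK addrC subrK.
exists (y * w); split; first by rewrite mulrA.
have <- : w' * y = y * w.
  by rewrite -[w' * y]mulr1 -xyw !mulrA -(mulrA _ y x) w'yx mul1r.
by rewrite -mulrA.
Qed.

Lemma local_jac_or_runit x : local_ring K -> jac x \/ runit x.
Proof.
move=> hl; have [jx|njx] := classic (jac x); first by left.
by right; apply: local_runit.
Qed.

Definition similar (a b : K) : Prop :=
  exists p q : K, p * q = 1 /\ q * p = 1 /\ b = q * a * p.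

Lemma similar_trans a b c : similar a b -> similar b c -> similar a c.
Proof.
move=> [p [q [pq [qp ->]]]] [p' [q' [pq' [qp' ->]]]].
exists (p * p'), (q' * q); split; last split.
- by rewrite -mulrA (mulrA p') pq' mul1r.
- by rewrite -mulrA (mulrA q) qp mul1r.
- by rewrite !mulrA.
Qed.

Definition strongly_J_clean_by (a e : K) : Prop :=
  e * e = e /\ a * e = e * a /\ jac (a - e).

Lemma strongly_J_clean_by_conj p q a e : p * q = 1 -> q * p = 1 ->
  strongly_J_clean_by a e -> strongly_J_clean_by (q * a * p) (q * e * p).
Proof.
move=> pq qp [ee [ae je]]; split; last split.
- by rewrite !mulrA -(mulrA _ p q) pq mulr1 -(mulrA q e e) ee.
- by rewrite !mulrA -!(mulrA _ p q) pq !mulr1 -(mulrA q a e) ae !mulrA.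
- by rewrite -mulrBl -mulrBr; apply/jacMr/jacMl.
Qed.

Lemma strongly_J_clean_similar a b :
  similar a b -> (exists f, strongly_J_clean_by b f) ->
  exists e, strongly_J_clean_by a e.
Proof.
move=> [p [q [pq [qp ->]]]] [f hf]; exists (p * f * q).
have -> : a = p * (q * a * p) * q by rewrite !mulrA pq mul1r -mulrA pq mulr1.
exact: strongly_J_clean_by_conj.
Qed.

Lemma strongly_J_clean_by0 a : jac a -> strongly_J_clean_by a 0.
Proof. by move=> ja; rewrite /strongly_J_clean_by !mulr0 mul0r subr0. Qed.

Lemma strongly_J_clean_by1 a : jac (1 - a) -> strongly_J_clean_by a 1.
Proof.
move=> ja; rewrite /strongly_J_clean_by !mulr1 mul1r.
by do 2!split => //; rewrite -opprB; apply: jacN.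
Qed.

End RingTheory.

Section RingMorphisms.
Variables K K' : nzRingType.

Lemma rmorph_runit (f : {rmorphism K -> K'}) x : runit x -> runit (f x).
Proof. by move=> [y [xy yx]]; exists (f y); rewrite -!rmorphM xy yx rmorph1. Qed.

Lemma rmorph_similar (f : {rmorphism K -> K'}) a b :
  similar a b -> similar (f a) (f b).
Proof.
move=> [p [q [pq [qp ->]]]]; exists (f p), (f q).
by rewrite -!rmorphM pq qp rmorph1.
Qed.

End RingMorphisms.

Section RingInvolutions.
Variable K : nzRingType.

Lemma jac_involutive (f : {rmorphism K -> K}) x : involutive f -> jac x -> jac (f x).
Proof.
move=> fK jx y; have -> : 1 - y * f x = f (1 - f y * x).
  by rewrite rmorphB rmorph1 rmorphM fK.
by apply: rmorph_runit; apply: jx.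
Qed.

Lemma strongly_J_clean_by_involutive (f : {rmorphism K -> K}) a e :
  involutive f -> strongly_J_clean_by a e -> strongly_J_clean_by (f a) (f e).
Proof.
move=> fK [ee [ae jae]]; split; last split.
- by rewrite -rmorphM ee.
- by rewrite -!rmorphM ae.
- by rewrite -rmorphB; apply: jac_involutive.
Qed.

End RingInvolutions.

(* The carrier of M_2(R; s), tagged with the centrality of s (associativity
   needs s^2 central) so that the ring instance below is keyed on it. *)
Definition M2c (R : nzRingType) (s : R) (_ : central s) : Type := M2 R.

Section M2Ring.
Variables (R : nzRingType) (s : R) (s_central : central s).
Local Notation T := (M2c s_central).

Definition M2_tuple (A : M2 R) := (m11 A, m12 A, m21 A, m22 A).
Definition M2_of_tuple (x : R * R * R * R) : M2 R :=
  let: (a, b, c, d) := x in mkM2 a b c d.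
Lemma M2_tupleK : cancel M2_tuple M2_of_tuple. Proof. by case. Qed.
HB.instance Definition _ := Choice.copy T (can_type M2_tupleK).

Lemma M2addA : associative (@M2add R).
Proof. by move=> [????] [????] [????]; rewrite /M2add /= !addrA. Qed.
Lemma M2addC : commutative (@M2add R).
Proof. by move=> [????] [????]; rewrite /M2add /=; congr mkM2; apply: addrC. Qed.
Lemma M2add0 : left_id (mkM2 0 0 0 0) (@M2add R).
Proof. by move=> [????]; rewrite /M2add /= !add0r. Qed.
Lemma M2addN : left_inverse (mkM2 0 0 0 0) (@M2opp R) (@M2add R).
Proof. by move=> [????]; rewrite /M2add /= !addNr. Qed.
HB.instance Definition _ := GRing.isZmodule.Build T M2addA M2addC M2add0 M2addN.

Lemma mulr_sqr_central x : x * s ^+ 2 = s ^+ 2 * x.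
Proof. by rewrite expr2 mulrA -s_central -mulrA -s_central mulrA. Qed.

Lemma M2mulA : associative (M2mul s).
Proof.
move=> [????] [????] [????]; rewrite /M2mul /=.
have := mulr_sqr_central; move: (s ^+ 2) => t tC.
by congr mkM2; rewrite !(mulrDl, mulrDr) !mulrA ?tC ?mulrA addrACA.
Qed.
Lemma M2mul1 : left_id (M2one R) (M2mul s).
Proof. by move=> [????]; rewrite /M2mul /= !(mul1r, mul0r, mulr0, addr0, add0r). Qed.
Lemma M2mulr1 : right_id (M2one R) (M2mul s).
Proof. by move=> [????]; rewrite /M2mul /= !(mulr1, mul0r, mulr0, addr0, add0r). Qed.
Lemma M2mulDl : left_distributive (M2mul s) (@M2add R).
Proof.
by move=> [????] [????] [????]; rewrite /M2mul /M2add /=; congr mkM2;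
  rewrite !(mulrDl, mulrDr) addrACA.
Qed.
Lemma M2mulDr : right_distributive (M2mul s) (@M2add R).
Proof.
by move=> [????] [????] [????]; rewrite /M2mul /M2add /=; congr mkM2;
  rewrite !(mulrDl, mulrDr) addrACA.
Qed.
Lemma M2one_neq0 : (M2one R : T) != 0.
Proof. by apply/eqP => -[] /eqP; rewrite oner_eq0. Qed.
HB.instance Definition _ :=
  GRing.Zmodule_isNzRing.Build T M2mulA M2mul1 M2mulr1 M2mulDl M2mulDr M2one_neq0.

Lemma mkM2_mul a b c d a' b' c' d' :
  (mkM2 a b c d : T) * mkM2 a' b' c' d' =
  mkM2 (a * a' + s ^+ 2 * b * c') (a * b' + b * d')
       (c * a' + d * c') (s ^+ 2 * c * b' + d * d').
Proof. by []. Qed.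
Lemma mkM2_add a b c d a' b' c' d' :
  (mkM2 a b c d : T) + mkM2 a' b' c' d' = mkM2 (a + a') (b + b') (c + c') (d + d').
Proof. by []. Qed.
Lemma mkM2_opp a b c d : - (mkM2 a b c d : T) = mkM2 (- a) (- b) (- c) (- d).
Proof. by []. Qed.
Lemma mkM2_1 : (1 : T) = mkM2 1 0 0 1. Proof. by []. Qed.
Lemma mkM2_eta (A : T) : A = mkM2 (m11 A) (m12 A) (m21 A) (m22 A).
Proof. by case: A. Qed.

Lemma lower_triangular_runit a c d : runit a -> runit d -> runit (mkM2 a 0 c d : T).
Proof.
move=> [a' [aa' a'a]] [d' [dd' d'd]]; exists (mkM2 a' 0 (- (d' * c * a')) d').
rewrite !mkM2_mul !(mulr0, mul0r, addr0, add0r); split; congr mkM2 => //.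
  by rewrite mulrN !mulrA dd' mul1r subrr.
by rewrite mulNr -!mulrA a'a mulr1 addNr.
Qed.

Lemma upper_triangular_runit a b d : runit a -> runit d -> runit (mkM2 a b 0 d : T).
Proof.
move=> [a' [aa' a'a]] [d' [dd' d'd]]; exists (mkM2 a' (- (a' * b * d')) 0 d').
rewrite !mkM2_mul !(mulr0, mul0r, addr0, add0r); split; congr mkM2 => //.
  by rewrite mulrN !mulrA aa' mul1r addNr.
by rewrite mulNr -!mulrA d'd mulr1 addrN.
Qed.

(* Gaussian elimination: 1 - X factors as a lower times an upper triangular
   matrix, the last pivot being 1 minus a Schur complement lying in J. *)
Lemma runit_1B_jac_entries x y z w : jac x -> jac y -> jac z -> jac w ->
  runit (1 - (mkM2 x y z w : T)).
Proof.
move=> jx jy jz jw; have [u [_ ux]] := jac_runit_1B jx.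
have -> : 1 - (mkM2 x y z w : T) =
    (mkM2 1 0 (- (z * u)) 1 : T) * mkM2 (1 - x) (- y) 0 (1 - (w + s ^+ 2 * z * u * y)).
  rewrite mkM2_1 mkM2_opp mkM2_add mkM2_mul !(mulr0, mul0r, mul1r, addr0, add0r).
  congr mkM2; first by rewrite mulNr -mulrA ux mulr1.
  by rewrite mulrN mulrN mulNr opprK !mulrA [RHS]addrC opprD addrA subrK.
apply: runitM; first by apply: lower_triangular_runit; exact: runit1.
apply: upper_triangular_runit; apply: jac_runit_1B => //.
by apply/jacD/jacMr/jacMr/jacMl.
Qed.

Lemma jac_mkM2 a b c d : jac a -> jac b -> jac c -> jac d -> jac (mkM2 a b c d : T).
Proof.
move=> ja jb jc jd [y1 y2 y3 y4]; rewrite mkM2_mul.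
by apply: runit_1B_jac_entries; apply: jacD; apply: jacMl.
Qed.

Lemma jac_diag a d : jac (mkM2 a 0 0 d : T) -> jac a /\ jac d.
Proof.
move=> jad; split=> y.
  have [Q []] := jad (mkM2 y 0 0 0).
  rewrite !mkM2_mul mkM2_opp mkM2_1 mkM2_add [Q]mkM2_eta !mkM2_mul.
  rewrite !(oppr0, mulr0, mul0r, mulr1, mul1r, addr0, add0r, subr0).
  by case=> e1 _ _ _ [e2 _ _ _]; exists (m11 Q).
have [Q []] := jad (mkM2 0 0 0 y).
rewrite !mkM2_mul mkM2_opp mkM2_1 mkM2_add [Q]mkM2_eta !mkM2_mul.
rewrite !(oppr0, mulr0, mul0r, mulr1, mul1r, addr0, add0r, subr0).
by case=> _ _ _ e1 [_ _ _ e2]; exists (m22 Q).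
Qed.

Lemma idem_corners_jac (E : T) : E * E = E -> jac (m11 E) -> jac (m22 E) -> jac E.
Proof.
case: E => e1 e2 e3 e4; rewrite mkM2_mul => -[_ eq12 eq21 _] /= j1 j4.
apply: jac_mkM2 => //.
  by rewrite -eq12; apply: jacD; [apply: jacMr | apply: jacMl].
by rewrite -eq21; apply: jacD; [apply: jacMl | apply: jacMr].
Qed.

Lemma idem_corner_1B (E : T) :
  E * E = E -> runit (m11 E) -> jac (1 - m22 E) -> jac (1 - m11 E).
Proof.
case: E => e1 e2 e3 e4; rewrite mkM2_mul => -[eq11 eq12 eq21 _] /= u1 j4.
have j2 : jac e2.
  apply: (jac_cancell u1); have <- : e2 * (1 - e4) = e1 * e2.
    by rewrite mulrBr mulr1 -{1}eq12 addrK.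
  exact: jacMl.
have j3 : jac e3.
  apply: (jac_cancelr u1); have <- : (1 - e4) * e3 = e3 * e1.
    by rewrite mulrBl mul1r -{1}eq21 addrK.
  exact: jacMr.
apply: (jac_cancell u1); have -> : e1 * (1 - e1) = s ^+ 2 * e2 * e3.
  by rewrite mulrBr mulr1 -{1}eq11 [e1 * e1 + _]addrC addrK.
by apply/jacMr/jacMl.
Qed.

(* The conjugating unit is u = [e1, -e2; e3, 1 - e4], which satisfies
   E u = u diag(1, 0) and factors as [1, 0; e3 e1^-1, 1] [e1, -e2; 0, 1]. *)
Lemma idem_similar_E11 (E : T) :
  E * E = E -> runit (m11 E) -> runit (1 - m22 E) -> similar E (diag2 1 0).
Proof.
case: E => e1 e2 e3 e4; rewrite mkM2_mul => -[eq11 eq12 eq21 eq22] /=.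
move=> [a' [e1a' a'e1]] [f' [ff' _]].
have h12 : e2 * (1 - e4) = e1 * e2 by rewrite mulrBr mulr1 -{1}eq12 addrK.
have h22 : e4 * (1 - e4) = s ^+ 2 * e3 * e2 by rewrite mulrBr mulr1 -{1}eq22 addrK.
have e4E : s ^+ 2 * e3 * a' * e2 = e4.
  rewrite -[LHS]mulr1 -ff' mulrA -(mulrA _ e2) h12 mulrA -(mulrA _ a' e1) a'e1.
  by rewrite mulr1 -h22 -mulrA ff' mulr1.
pose u : T := mkM2 e1 (- e2) e3 (1 - e4).
have [u' [uu' u'u]] : runit u.
  have -> : u = (mkM2 1 0 (e3 * a') 1 : T) * mkM2 e1 (- e2) 0 1.
    rewrite mkM2_mul !(mulr0, mul0r, mulr1, mul1r, addr0, add0r); congr mkM2.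
      by rewrite -mulrA a'e1 mulr1.
    by rewrite mulrN !mulrA e4E addrC.
  apply: runitM; first by apply: lower_triangular_runit; exact: runit1.
  by apply: upper_triangular_runit; [exists a' | exact: runit1].
have Eu : (mkM2 e1 e2 e3 e4 : T) * u = u * diag2 1 0.
  rewrite /u /diag2 !mkM2_mul !(mulr0, mul0r, mulr1, addr0) !mulrN h12 h22.
  by rewrite eq11 eq21 !addNr.
by exists u, u'; do 2!split => //; rewrite -mulrA Eu mulrA u'u mul1r.
Qed.

Lemma strongly_J_clean_by_E11 (B : T) : strongly_J_clean_by B (diag2 1 0) ->
  exists v w, jac (v - 1) /\ jac w /\ B = diag2 v w.
Proof.
case: B => b1 b2 b3 b4 [_ [+ jB]].
rewrite /diag2 !mkM2_mul !(mulr0, mul0r, mulr1, mul1r, addr0, add0r).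
case=> b2E b3E; move: jB; rewrite -b2E b3E /diag2 mkM2_opp mkM2_add !(oppr0, addr0).
move=> jB; have [jv jw] := jac_diag jB.
by exists b1, b4.
Qed.

Lemma strongly_J_clean_by_similar_diag (A E : T) :
  strongly_J_clean_by A E -> runit (m11 E) -> runit (1 - m22 E) ->
  exists v w, jac (v - 1) /\ jac w /\ similar A (diag2 v w).
Proof.
move=> hAE u1 u4; have [ee _] := hAE.
have [P [Q [PQ [QP E11E]]]] := idem_similar_E11 ee u1 u4.
have := strongly_J_clean_by_conj PQ QP hAE; rewrite -E11E.
case/strongly_J_clean_by_E11=> v [w [jv [jw AE]]].
by exists v, w; do 2!split => //; exists P, Q.
Qed.

Lemma strongly_J_clean_by_diag v w :
  jac (v - 1) -> jac w -> strongly_J_clean_by (diag2 v w : T) (diag2 1 0).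
Proof.
move=> jv jw; rewrite /strongly_J_clean_by /diag2 !mkM2_mul mkM2_opp mkM2_add.
rewrite !(oppr0, mulr0, mul0r, mulr1, mul1r, addr0, add0r).
by do 2!split => //; apply: jac_mkM2 => //; exact: jac0.
Qed.

(* Conjugation by [0, 1; 1, 0] up to the factor s^2: an automorphism of
   M_2(R; s) exchanging the two diagonal corners. *)
Definition M2swap (X : T) : T := mkM2 (m22 X) (m21 X) (m12 X) (m11 X).

Lemma M2swapK : involutive M2swap. Proof. by case. Qed.

Lemma M2swap_is_zmod_morphism : zmod_morphism M2swap.
Proof. by case=> ???? [????]. Qed.

Lemma M2swap_is_monoid_morphism : monoid_morphism M2swap.
Proof.
split=> // -[????] [????]; rewrite /M2swap !mkM2_mul /=.
by congr mkM2; apply: addrC.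
Qed.

HB.instance Definition _ :=
  GRing.isZmodMorphism.Build T T M2swap M2swap_is_zmod_morphism.
HB.instance Definition _ :=
  GRing.isMonoidMorphism.Build T T M2swap M2swap_is_monoid_morphism.

Lemma similar_diag_swap v w : runit s -> similar (diag2 w v : T) (diag2 v w).
Proof.
move=> [s' [ss' _]].
have s2s' : s ^+ 2 * (s' * s') = 1 by rewrite expr2 -mulrA (mulrA s s') ss' mul1r.
exists (mkM2 0 1 1 0), (mkM2 0 (s' * s') (s' * s') 0).
rewrite /diag2 mkM2_1 !mkM2_mul !(mulr0, mul0r, mulr1, mul1r, addr0, add0r) /=.
by split; [|split]; congr mkM2; rewrite // mulrA s2s' mul1r.
Qed.

Lemma M2_strongly_J_clean_by_cases (A E : T) :
  local_ring R -> strongly_J_clean_by A E ->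
  [\/ jac A, jac (1 - A)
     | exists v w, jac (v - 1) /\ jac w /\
         (similar A (diag2 v w) \/ similar A (diag2 w v))].
Proof.
move=> hl hAE; have [ee [_ jAE]] := hAE.
have [j1|u1] := local_jac_or_runit (m11 E) hl.
  have [j4|u4] := local_jac_or_runit (m22 E) hl.
    by apply: Or31; rewrite -(subrK E A); apply: jacD => //; apply: idem_corners_jac.
  have := strongly_J_clean_by_involutive M2swapK hAE.
  case/strongly_J_clean_by_similar_diag => [//|| v [w [jv [jw simA]]]].
    exact: jac_runit_1B.
  apply: Or33; exists v, w; do 2!split => //; right.
  have := rmorph_similar M2swap simA.
  by rewrite -[X in similar X _]/(M2swap (M2swap A)) M2swapK.
have [j4|u4] := local_jac_or_runit (1 - m22 E) hl.
  apply: Or32; have -> : 1 - A = (1 - E) - (A - E) by rewrite opprB addrA subrK.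
  apply: jacB => //; apply: idem_corners_jac => //; last exact: idem_corner_1B.
  by rewrite mulrBl mul1r mulrBr mulr1 ee subrr subr0.
have [v [w [jv [jw simA]]]] := strongly_J_clean_by_similar_diag hAE u1 u4.
by apply: Or33; exists v, w; do 2!split => //; left.
Qed.

Lemma strongly_J_clean_of_similar_diag (A : T) v w : jac (v - 1) -> jac w ->
  similar A (diag2 v w) \/ similar A (diag2 w v) -> exists E, strongly_J_clean_by A E.
Proof.
move=> jv jw [] simA; apply: (strongly_J_clean_similar simA).
  by exists (diag2 1 0); apply: strongly_J_clean_by_diag.
exists (M2swap (diag2 1 0)).
exact: (strongly_J_clean_by_involutive M2swapK (strongly_J_clean_by_diag jv jw)).
Qed.

End M2Ring.

Theorem lemma2p8 (R : nzRingType) (s : R) (A : M2 R) :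
  local_ring R -> central s ->
  (M2strongly_J_clean s A <->
     [\/ M2jac s A,
         M2jac s (M2sub (M2one R) A),
         runit s /\ (exists v w : R, jac (v - 1) /\ jac w /\
                       M2similar s A (diag2 v w))
       | jac s /\ (exists v w : R, jac (v - 1) /\ jac w /\
                       (M2similar s A (diag2 v w) \/ M2similar s A (diag2 w v)))]).
Proof.
move=> hl hs; pose T := M2c hs; split.
  move=> [E hAE].
  have [jA|jA|] := M2_strongly_J_clean_by_cases hl (hAE : strongly_J_clean_by (A : T) E).
  - exact: Or41.
  - exact: Or42.
  move=> [v [w [jv [jw simA]]]]; have [js|us] := local_jac_or_runit s hl.
    by apply: Or44; split => //; exists v, w.
  apply: Or43; split => //; exists v, w; do 2!split => //.
  by case: simA => // simA; apply: similar_trans simA (similar_diag_swap hs v w us).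
case=> [jA|jA|[_ [v [w [jv [jw simA]]]]]|[_ [v [w [jv [jw simA]]]]]];
  change (exists E : T, strongly_J_clean_by (A : T) E).
- by exists 0; apply: strongly_J_clean_by0.
- by exists 1; apply: strongly_J_clean_by1.
- by apply: (strongly_J_clean_of_similar_diag jv jw); left.
- exact: (strongly_J_clean_of_similar_diag jv jw).
Qed.
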